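(* Let $\mathbf{Sets}_{+1}$ be the category whose objects are sets and whose morphisms $X\to Y$ are functions $f\colon X\to Y+1$ (i.e. partial functions), with composition $g\odot f=[g,\kappa_2]\circ f$. Define $\square\colon \mathbf{Sets}_{+1}\to\mathbf{PoSets}^{\mathrm{op}}$ by $\square(X)=\mathcal{P}(X)$ ordered by inclusion, and for $f\colon X\to Y+1$ and $Q\subseteq Y$, $\square(f)(Q)=f^{-1}(Q\cup\{*\})=\{x\in X \mid \forall y\in Y.\ f(x)=y\Rightarrow y\in Q\}$. Then the forgetful functor $U\colon\int\square\to\mathbf{Sets}_{+1}$ has a left adjoint $0$ with $0(X)=(X,\emptyset)$ and a right adjoint $1$ with $1(X)=(X,X)$; moreover there is a functor (comprehension) $\int\square\to\mathbf{Sets}_{+1}$ with $(X,P)\mapsto P$ which is right adjoint to $1$, and a functor (quotient) $\int\square\to\mathbf{Sets}_{+1}$ with $(X,P)\mapsto \neg P=X\setminus P$ which is left adjoint to $0$. Thus there is a chain of adjunctions $\mathrm{Quotient}\dashv 0\dashv U\dashv 1\dashv \mathrm{Comprehension}$.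
   Context: Here $Y+1=Y\sqcup\{*\}$ is disjoint union with a singleton, $\kappa_2\colon 1\to Y+1$ the coprojection. For a functor $F\colon\mathcal{B}\to\mathbf{PoSets}^{\mathrm{op}}$, $\int F$ is the category with objects $(X,P)$, $P\in F(X)$, and morphisms $f\colon(X,P)\to(Y,Q)$ the morphisms $f\colon X\to Y$ of $\mathcal{B}$ with $P\le F(f)(Q)$; the forgetful functor sends $(X,P)\mapsto X$, $f\mapsto f$; $0$ and $1$ act as identity on morphisms. *)

(* Minimal category-theoretic data, with the laws stated as
   separate predicates so that the theorem can assert them. *)
From Stdlib Require Import ClassicalEpsilon.

Set Implicit Arguments.
Unset Strict Implicit.

Record CatData := {
  Ob : Type;
  Hom : Ob -> Ob -> Type;
  idm : forall a, Hom a a;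
  comp : forall a b c, Hom b c -> Hom a b -> Hom a c
}.
Arguments Hom : clear implicits.
Arguments idm {_} _.
Arguments comp {_ _ _ _} _ _.

Record FunctorData (C D : CatData) := {
  Fob : Ob C -> Ob D;
  Fhom : forall a b, Hom C a b -> Hom D (Fob a) (Fob b)
}.
Arguments Fob {C D} f _.
Arguments Fhom {C D} f {a b} _.

Definition is_functor (C D : CatData) (F : FunctorData C D) : Prop :=
  (forall a, Fhom F (idm a) = idm (Fob F a)) /\
  (forall a b c (g : Hom C b c) (f : Hom C a b),
      Fhom F (comp g f) = comp (Fhom F g) (Fhom F f)).

Definition adjoint (C D : CatData) (F : FunctorData C D) (G : FunctorData D C)
  : Prop :=
  exists (phi : forall c d, Hom D (Fob F c) d -> Hom C c (Fob G d))
         (psi : forall c d, Hom C c (Fob G d) -> Hom D (Fob F c) d),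
    (forall c d f, psi c d (phi c d f) = f) /\
    (forall c d g, phi c d (psi c d g) = g) /\
    (forall c c' d d' (h : Hom C c' c) (k : Hom D d d') (f : Hom D (Fob F c) d),
        phi c' d' (comp k (comp f (Fhom F h)))
        = comp (Fhom G k) (comp (phi c d f) h)).

(* Y+1 is option Y, with None playing the role of the point *. *)
Definition pcomp (X Y Z : Type) (g : Y -> option Z) (f : X -> option Y)
  : X -> option Z :=
  fun x => match f x with Some y => g y | None => None end.

Definition SetsP1 : CatData := {|
  Ob := Type;
  Hom := fun X Y => X -> option Y;
  idm := fun X => @Some X;
  comp := fun X Y Z g f => pcomp g f
|}.

Definition box (X Y : Type) (f : X -> option Y) (Q : Y -> Prop) : X -> Prop :=
  fun x => forall y, f x = Some y -> Q y.

Definition IntOb := {X : Type & X -> Prop}.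
Definition IntHom (A B : IntOb) :=
  {f : projT1 A -> option (projT1 B) |
    forall x, projT2 A x -> box f (projT2 B) x}.

Definition int_id (A : IntOb) : IntHom A A.
Proof.
  exists (@Some (projT1 A)). intros x Hx y E. injection E as <-. exact Hx.
Defined.

Definition int_comp (A B C : IntOb) (g : IntHom B C) (f : IntHom A B)
  : IntHom A C.
Proof.
  exists (pcomp (proj1_sig g) (proj1_sig f)).
  intros x Hx z. unfold pcomp.
  destruct (proj1_sig f x) as [y|] eqn:Ey; [|discriminate].
  intro Ez. exact (proj2_sig g y (proj2_sig f x Hx y Ey) z Ez).
Defined.

Definition IntBox : CatData := {|
  Ob := IntOb;
  Hom := IntHom;
  idm := int_id;
  comp := int_comp
|}.

Definition U : FunctorData IntBox SetsP1 :=
  @Build_FunctorData IntBox SetsP1 (fun A : IntOb => projT1 A)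
    (fun A B (f : IntHom A B) => proj1_sig f).

Definition zero_hom (X Y : Type) (f : X -> option Y)
  : IntHom (existT _ X (fun _ => False)) (existT _ Y (fun _ => False)).
Proof. exists f. intros x []. Defined.

Definition Zero : FunctorData SetsP1 IntBox :=
  @Build_FunctorData SetsP1 IntBox
    (fun X : Type => existT (fun T : Type => T -> Prop) X (fun _ => False))
    (fun X Y f => @zero_hom X Y f).

Definition one_hom (X Y : Type) (f : X -> option Y)
  : IntHom (existT _ X (fun _ => True)) (existT _ Y (fun _ => True)).
Proof. exists f. intros x _ y _. exact I. Defined.

Definition One : FunctorData SetsP1 IntBox :=
  @Build_FunctorData SetsP1 IntBox
    (fun X : Type => existT (fun T : Type => T -> Prop) X (fun _ => True))
    (fun X Y f => @one_hom X Y f).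

Definition compr_hom (A B : IntOb) (f : IntHom A B)
  : {x | projT2 A x} -> option {y | projT2 B y} :=
  fun xp =>
    match xp with
    | exist _ x px =>
        (match proj1_sig f x as o return proj1_sig f x = o -> option {y | projT2 B y} with
         | Some y => fun e => Some (exist _ y (proj2_sig f x px y e))
         | None => fun _ => None
         end) eq_refl
    end.

Definition Comprehension : FunctorData IntBox SetsP1 :=
  @Build_FunctorData IntBox SetsP1 (fun A : IntOb => {x | projT2 A x})
    (fun A B f => @compr_hom A B f).

Definition quot_hom (A B : IntOb) (f : IntHom A B)
  : {x | ~ projT2 A x} -> option {y | ~ projT2 B y} :=
  fun xp =>
    match proj1_sig f (proj1_sig xp) with
    | Some y =>
        match excluded_middle_informative (projT2 B y) with
        | left _ => None
        | right n => Some (exist _ y n)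
        end
    | None => None
    end.

Definition Quotient : FunctorData IntBox SetsP1 :=
  @Build_FunctorData IntBox SetsP1 (fun A : IntOb => {x | ~ projT2 A x})
    (fun A B f => @quot_hom A B f).

(* Every adjunction is a bijection of hom-sets that is checked on the underlying
   partial functions. For [0 -| U] and [U -| 1] there is nothing to do: a map out of
   [(X, empty)] or into [(Y, Y)] is just a partial function. For [1 -| Comprehension]
   a partial map [X -> P] is a partial map [X -> Y] landing in [P], and for
   [Quotient -| 0] a map [(X, P) -> (Y, empty)] must send every [x] in [P] to [*],
   so it is determined by its restriction to [X \ P]. The quotient is functorial
   because a morphism [(X, P) -> (Y, Q)] maps [P] into [Q]: discarding the points
   that land in [Q] commutes with composition. *)
From Stdlib Require Import ClassicalEpsilon FunctionalExtensionality ProofIrrelevance.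

Section HomSetAdjunction.

Context {C D : CatData} {F : FunctorData C D} {G : FunctorData D C}.

Lemma adjoint_by_natural_inverse
    {phi : forall c d, Hom D (Fob F c) d -> Hom C c (Fob G d)}
    {psi : forall c d, Hom C c (Fob G d) -> Hom D (Fob F c) d} :
  (forall c d f, psi c d (phi c d f) = f) ->
  (forall c d g, phi c d (psi c d g) = g) ->
  (forall c c' d d' (h : Hom C c' c) (k : Hom D d d') (g : Hom C c (Fob G d)),
      psi c' d' (comp (Fhom G k) (comp g h)) = comp k (comp (psi c d g) (Fhom F h))) ->
  adjoint F G.
Proof.
  intros psi_phi phi_psi psi_natural.
  exists phi, psi; split; [exact psi_phi | split; [exact phi_psi |]].
  intros c c' d d' h k f.
  rewrite <- (psi_phi c d f) at 1.
  now rewrite <- psi_natural, phi_psi.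
Qed.

End HomSetAdjunction.

Section PartialMaps.

Context {X Y Z W : Type}.

Lemma pcompA (h : Z -> option W) (g : Y -> option Z) (f : X -> option Y) :
  pcomp h (pcomp g f) = pcomp (pcomp h g) f.
Proof. apply functional_extensionality; intro x; unfold pcomp; now destruct (f x). Qed.

Lemma pcomp_option_map (m : Y -> Z) (g : Z -> option W) (f : X -> option Y) :
  pcomp g (fun x => option_map m (f x)) = pcomp (fun y => g (m y)) f.
Proof. apply functional_extensionality; intro x; unfold pcomp; now destruct (f x). Qed.

Lemma option_map_pcomp (m : Z -> W) (g : Y -> option Z) (f : X -> option Y) :
  (fun x => option_map m (pcomp g f x)) = pcomp (fun y => option_map m (g y)) f.
Proof. apply functional_extensionality; intro x; unfold pcomp; now destruct (f x). Qed.

End PartialMaps.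

Lemma option_map_proj1_sig_inj (T : Type) (P : T -> Prop) (a b : option {x | P x}) :
  option_map (@proj1_sig _ _) a = option_map (@proj1_sig _ _) b -> a = b.
Proof.
  destruct a as [[x px]|], b as [[y py]|]; simpl; intro E; try discriminate; auto.
  injection E as ->; now rewrite (proof_irrelevance _ px py).
Qed.

Lemma sub_pmap_eq (S T : Type) (P : T -> Prop) (f g : S -> option {y | P y}) :
  (fun x => option_map (@proj1_sig _ _) (f x)) = (fun x => option_map (@proj1_sig _ _) (g x)) ->
  f = g.
Proof.
  intro E; apply functional_extensionality; intro x.
  apply option_map_proj1_sig_inj; exact (f_equal (fun h => h x) E).
Qed.

Lemma IntHom_eq {A B : IntOb} (f g : IntHom A B) : proj1_sig f = proj1_sig g -> f = g.
Proof.
  destruct f as [f Hf], g as [g Hg]; simpl; intros ->.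
  now rewrite (proof_irrelevance _ Hf Hg).
Qed.

Lemma IntHom_zero_pred {A : IntOb} {Y : Type} (g : IntHom A (Fob Zero Y)) {x} :
  projT2 A x -> proj1_sig g x = None.
Proof.
  intro px; destruct (proj1_sig g x) as [y|] eqn:E; [|reflexivity].
  destruct (proj2_sig g x px y E).
Qed.

Lemma compr_hom_val {A B : IntOb} (f : IntHom A B) :
  (fun xp => option_map (@proj1_sig _ _) (compr_hom f xp))
  = fun xp => proj1_sig f (proj1_sig xp).
Proof.
  apply functional_extensionality; intros [x px]; destruct f as [f Hf]; unfold compr_hom; simpl.
  assert (dependent_match : forall o (e : f x = o),
    option_map (@proj1_sig _ _)
      (match o as o1 return f x = o1 -> option {y | projT2 B y} with
       | Some y => fun e => Some (exist _ y (Hf x px y e))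
       | None => fun _ => None end e) = o) by (intros [] e; reflexivity).
  apply dependent_match.
Qed.

Lemma compr_hom_id (A : IntOb) : compr_hom (int_id A) = @Some _.
Proof. apply sub_pmap_eq; now rewrite compr_hom_val. Qed.

Lemma compr_hom_comp (A B C : IntOb) (g : IntHom B C) (f : IntHom A B) :
  compr_hom (int_comp g f) = pcomp (compr_hom g) (compr_hom f).
Proof.
  apply sub_pmap_eq.
  rewrite option_map_pcomp, !compr_hom_val, <- pcomp_option_map, compr_hom_val.
  reflexivity.
Qed.

Lemma Comprehension_functor : is_functor Comprehension.
Proof. split; [exact compr_hom_id | exact compr_hom_comp]. Qed.

Definition guard {Y : Type} (Q : Y -> Prop) (y : Y) : option Y :=
  if excluded_middle_informative (Q y) then None else Some y.

Lemma quot_hom_val {A B : IntOb} (f : IntHom A B) :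
  (fun xp => option_map (@proj1_sig _ _) (quot_hom f xp))
  = fun xp => pcomp (guard (projT2 B)) (proj1_sig f) (proj1_sig xp).
Proof.
  apply functional_extensionality; intro xp; unfold quot_hom, pcomp, guard.
  destruct (proj1_sig f (proj1_sig xp)); [|reflexivity].
  now destruct excluded_middle_informative.
Qed.

Lemma guard_in {Y : Type} {Q : Y -> Prop} {y : Y} : Q y -> guard Q y = None.
Proof. intro py; unfold guard; now destruct excluded_middle_informative. Qed.

Lemma guard_out {Y : Type} {Q : Y -> Prop} {y : Y} : ~ Q y -> guard Q y = Some y.
Proof. intro ny; unfold guard; now destruct excluded_middle_informative. Qed.

Lemma guard_IntHom {B C : IntOb} (g : IntHom B C) :
  pcomp (pcomp (guard (projT2 C)) (proj1_sig g)) (guard (projT2 B))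
  = pcomp (guard (projT2 C)) (proj1_sig g).
Proof.
  apply functional_extensionality; intro y; unfold pcomp at 1.
  destruct (excluded_middle_informative (projT2 B y)) as [py|ny].
  - rewrite (guard_in py); unfold pcomp; destruct (proj1_sig g y) as [z|] eqn:E; [|reflexivity].
    unfold guard; destruct excluded_middle_informative as [|nz]; [reflexivity|].
    destruct (nz (proj2_sig g y py z E)).
  - now rewrite (guard_out ny).
Qed.

Lemma guard_IntHom_zero {A : IntOb} {Y : Type} (g : IntHom A (Fob Zero Y)) :
  pcomp (proj1_sig g) (guard (projT2 A)) = proj1_sig g.
Proof.
  apply functional_extensionality; intro x; unfold pcomp.
  destruct (excluded_middle_informative (projT2 A x)) as [px|nx].
  - now rewrite (guard_in px), (IntHom_zero_pred g px).
  - now rewrite (guard_out nx).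
Qed.

Lemma quot_hom_id (A : IntOb) : quot_hom (int_id A) = @Some _.
Proof.
  apply sub_pmap_eq; rewrite quot_hom_val.
  apply functional_extensionality; intros [x nx]; exact (guard_out nx).
Qed.

Lemma quot_hom_comp (A B C : IntOb) (g : IntHom B C) (f : IntHom A B) :
  quot_hom (int_comp g f) = pcomp (quot_hom g) (quot_hom f).
Proof.
  apply sub_pmap_eq.
  rewrite option_map_pcomp, (quot_hom_val (int_comp g f)), (quot_hom_val g).
  rewrite <- (pcomp_option_map _ (pcomp (guard (projT2 C)) (proj1_sig g))), (quot_hom_val f).
  apply functional_extensionality; intro xp.
  transitivity (pcomp (pcomp (guard (projT2 C)) (proj1_sig g))
                  (pcomp (guard (projT2 B)) (proj1_sig f)) (proj1_sig xp)); [|reflexivity].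
  change (proj1_sig (int_comp g f)) with (pcomp (proj1_sig g) (proj1_sig f)).
  now rewrite (pcompA _ _ (proj1_sig f)), pcompA, guard_IntHom.
Qed.

Lemma Quotient_functor : is_functor Quotient.
Proof. split; [exact quot_hom_id | exact quot_hom_comp]. Qed.

Lemma U_functor : is_functor U.
Proof. split; reflexivity. Qed.

Lemma Zero_functor : is_functor Zero.
Proof. split; intros; now apply IntHom_eq. Qed.

Lemma One_functor : is_functor One.
Proof. split; intros; now apply IntHom_eq. Qed.

Definition quotient_transpose (A : IntOb) (Y : Type)
    (h : {x | ~ projT2 A x} -> option Y) : IntHom A (Fob Zero Y).
Proof.
  exists (fun x => match excluded_middle_informative (projT2 A x) with
                   | left _ => None
                   | right nx => h (exist _ x nx)
                   end).
  intros x px y; destruct excluded_middle_informative; [discriminate | contradiction].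
Defined.

Lemma Quotient_Zero_adjoint : adjoint Quotient Zero.
Proof.
  apply (adjoint_by_natural_inverse (F := Quotient) (G := Zero) (phi := quotient_transpose)
           (psi := fun A Y g xp => proj1_sig g (proj1_sig xp))).
  - intros A Y h; apply functional_extensionality; intros [x nx]; simpl.
    destruct excluded_middle_informative as [|nx']; [contradiction|].
    now rewrite (proof_irrelevance _ nx' nx).
  - intros A Y g; apply IntHom_eq, functional_extensionality; intro x; simpl.
    destruct excluded_middle_informative as [px|]; [|reflexivity].
    symmetry; exact (IntHom_zero_pred g px).
  - intros A A' Y Y' h k g.
    transitivity (pcomp k (pcomp (proj1_sig g)
                    (fun xp => option_map (@proj1_sig _ _) (quot_hom h xp)))).
    + rewrite (quot_hom_val h); apply functional_extensionality; intro xp.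
      change (pcomp k (pcomp (proj1_sig g) (proj1_sig h)) (proj1_sig xp)
              = pcomp k (pcomp (proj1_sig g) (pcomp (guard (projT2 A)) (proj1_sig h)))
                  (proj1_sig xp)).
      now rewrite (pcompA (proj1_sig g)), guard_IntHom_zero.
    + now rewrite pcomp_option_map.
Qed.

Lemma Zero_U_adjoint : adjoint Zero U.
Proof.
  apply (adjoint_by_natural_inverse (F := Zero) (G := U) (phi := fun X B f => proj1_sig f)
           (psi := fun X B g => exist _ g (fun x (f : False) => match f with end))).
  - intros; now apply IntHom_eq.
  - reflexivity.
  - intros; now apply IntHom_eq.
Qed.

Lemma U_One_adjoint : adjoint U One.
Proof.
  apply (adjoint_by_natural_inverse (F := U) (G := One)
           (phi := fun A Y f => exist _ f (fun x _ y _ => I) : IntHom A (Fob One Y))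
           (psi := fun A Y g => proj1_sig g)).
  - reflexivity.
  - intros; now apply IntHom_eq.
  - reflexivity.
Qed.

Definition comprehension_transpose (X : Type) (B : IntOb)
    (g : X -> option {y | projT2 B y}) : IntHom (Fob One X) B.
Proof.
  exists (fun x => option_map (@proj1_sig _ _) (g x)).
  intros x _ y E; destruct (g x) as [[z pz]|]; simpl in E; [|discriminate].
  injection E as <-; exact pz.
Defined.

Lemma One_Comprehension_adjoint : adjoint One Comprehension.
Proof.
  apply (adjoint_by_natural_inverse (F := One) (G := Comprehension)
           (phi := fun X B f x => compr_hom f (exist _ x I))
           (psi := comprehension_transpose)).
  - intros X B f; apply IntHom_eq; simpl.
    exact (f_equal (fun m x => m (exist _ x I)) (compr_hom_val f)).
  - intros X B g; apply sub_pmap_eq.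
    exact (f_equal (fun m x => m (exist _ x I)) (compr_hom_val (comprehension_transpose _ _ g))).
  - intros X X' B B' h k g; apply IntHom_eq; simpl.
    rewrite option_map_pcomp, (compr_hom_val k), <- (pcomp_option_map _ (proj1_sig k)).
    now rewrite option_map_pcomp.
Qed.

Theorem proposition3p2 :
  is_functor U /\ is_functor Zero /\ is_functor One /\
  is_functor Comprehension /\ is_functor Quotient /\
  adjoint Quotient Zero /\ adjoint Zero U /\ adjoint U One /\
  adjoint One Comprehension.
Proof.
  exact (conj U_functor (conj Zero_functor (conj One_functor
    (conj Comprehension_functor (conj Quotient_functor
    (conj Quotient_Zero_adjoint (conj Zero_U_adjoint
    (conj U_One_adjoint One_Comprehension_adjoint)))))))).
Qed.
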